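(* Let $\mathbf X=\{X_n\}$ and $\mathbf Y=\{Y_n\}$ be general sources. If $\mathbf X$ is an approximating source for $\mathbf Y$, then $$\inf_{0<\epsilon<1}\ \liminf_{n\to\infty}\ \inf_{0\le\delta<1-\epsilon}\{c_n^x(\delta+\epsilon)-c_n^y(\delta)\}\ \ge 0 .$$
   Context: Logarithms are natural. A general source $\mathbf X=\{X_n\}_{n\ge1}$ is a sequence of random variables, $X_n$ taking values in a countable set $\mathcal X_n$, with no consistency requirements between different $n$. Similarly $Y_n$ takes values in a countable set $\mathcal Y_n$. For a random variable $Z$ on a countable set $\mathcal Z$ with pmf $P_Z$, list the elements of positive probability as $z_1,z_2,\dots$ (a finite or countably infinite list) with $P_Z(z_1)\ge P_Z(z_2)\ge\cdots$ (ties broken arbitrarily). Set $\delta_0=0$ and $\delta_k=\sum_{i\le k}P_Z(z_i)$. For $\delta\in[0,1)$ define $c^z(\delta)=\log\frac{1}{P_Z(z_k)}$, where $k$ is the unique index with $\delta\in[\delta_{k-1},\delta_k)$. Here $c_n^x$ and $c_n^y$ denote this function built from $P_{X_n}$ and from $P_{Y_n}$ respectively. The variational distance is $d(P,Q)=\sum_a|P(a)-Q(a)|$. $\mathbf X$ is an approximating source for $\mathbf Y$ if there exist deterministic maps $\phi_n:\mathcal X_n\to\mathcal Y_n$ with $\lim_{n\to\infty}d(P_{Y_n},P_{\phi_n(X_n)})=0$. *)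

From Stdlib Require Import Reals Lra Lia Classical ClassicalEpsilon.
Open Scope R_scope.

(* Alphabets: every countable alphabet is identified with (a subset of) nat,
   letters outside the alphabet carrying probability 0.  A pmf on nat: *)
Definition is_pmf (P : nat -> R) : Prop :=
  (forall a, 0 <= P a) /\ infinite_sum P 1.

Definition series_sum (s : nat -> R) : R :=
  epsilon (inhabits 0) (fun l => infinite_sum s l).

Definition var_dist (P Q : nat -> R) : R :=
  series_sum (fun a => Rabs (P a - Q a)).

Definition push (P : nat -> R) (phi : nat -> nat) (b : nat) : R :=
  series_sum (fun a => if Nat.eq_dec (phi a) b then P a else 0).

Definition approximating (PX PY : nat -> nat -> R) : Prop :=
  exists phi : nat -> nat -> nat,
    Un_cv (fun n => var_dist (PY n) (push (PX n) (phi n))) 0.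

Fixpoint psum (f : nat -> R) (k : nat) : R :=
  match k with
  | O => 0
  | S k' => psum f k' + f k'
  end.

(* Index validity for an enumeration of length L (None = infinite). *)
Definition valid_idx (L : option nat) (i : nat) : Prop :=
  match L with None => True | Some m => (i < m)%nat end.

(* z 0, z 1, ... (0-based; z i is the paper's z_(i+1)) lists the elements of
   positive probability of P, each exactly once, in non-increasing order of
   probability (ties broken arbitrarily). *)
Definition is_decr_enum (P : nat -> R) (L : option nat) (z : nat -> nat) : Prop :=
  (forall i j, valid_idx L i -> valid_idx L j -> z i = z j -> i = j) /\
  (forall i, valid_idx L i -> 0 < P (z i)) /\
  (forall a, 0 < P a -> exists i, valid_idx L i /\ z i = a) /\
  (forall i, valid_idx L (S i) -> P (z (S i)) <= P (z i)).

(* c^z(delta) = log (1 / P(z_k)) where delta_(k-1) <= delta < delta_k,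
   delta_k = sum_(i<=k) P(z_i) (here with 0-based index i = k-1). *)
Definition cfun (P : nat -> R) (L : option nat) (z : nat -> nat) (delta : R) : R :=
  ln (/ P (z (epsilon (inhabits 0%nat)
    (fun i => valid_idx L i /\
              psum (fun j => P (z j)) i <= delta < psum (fun j => P (z j)) (S i))))).

From Stdlib Require Import Reals Lra Lia List Arith ClassicalEpsilon.
Open Scope R_scope.

(* Fix n and write P = P_{X_n}, Q = P_{Y_n}, d = d(Q, P_{phi(X_n)}).  Let
   c^x(delta + eps) = log 1/p with p = P(x_k), and c^y(delta) = log 1/q with
   q = Q(y_j), so that the k+1 most likely X-letters carry mass > delta + eps
   while the j most likely Y-letters carry mass <= delta.  Transporting the
   mass of those k+1 X-letters through phi, every output letter b receives
   either nothing or at least p; comparing with Q letter by letter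
   ("heavy" letters Q b > q have total mass <= delta) gives the
   transport inequality  (p - q) eps <= p d  whenever q < p.  Hence
   q > p exp(-gamma) as soon as d < eps (1 - exp(-gamma)), i.e. the gap of
   c-functions is >= -gamma. *)

Lemma psum_ext f g k : (forall a, (a < k)%nat -> f a = g a) -> psum f k = psum g k.
Proof.
  intros H; induction k; simpl; auto.
  rewrite IHk by (intros; apply H; lia). rewrite H by lia. reflexivity.
Qed.

Lemma psum_nonneg f k : (forall a, 0 <= f a) -> 0 <= psum f k.
Proof. intros H; induction k; simpl; [lra|]. specialize (H k); lra. Qed.

Lemma psum_le f g k : (forall a, (a < k)%nat -> f a <= g a) -> psum f k <= psum g k.
Proof.
  intros H; induction k; simpl; [lra|].
  assert (f k <= g k) by (apply H; lia).
  assert (psum f k <= psum g k) by (apply IHk; intros; apply H; lia). lra.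
Qed.

Lemma psum_plus f g k : psum (fun i => f i + g i) k = psum f k + psum g k.
Proof. induction k; simpl; [lra|]. rewrite IHk; lra. Qed.

Lemma psum_scal r f k : psum (fun i => r * f i) k = r * psum f k.
Proof. induction k; simpl; [lra|]. rewrite IHk; lra. Qed.

Lemma psum_mono f k k' : (forall a, 0 <= f a) -> (k <= k')%nat -> psum f k <= psum f k'.
Proof. intros H Hk; induction Hk; simpl; [lra|]. specialize (H m); lra. Qed.

Lemma psum_swap (F : nat -> nat -> R) M K :
  psum (fun b => psum (fun i => F b i) K) M = psum (fun i => psum (fun b => F b i) M) K.
Proof.
  induction M; simpl.
  - induction K; simpl; [lra|]. rewrite <- IHK; lra.
  - rewrite IHM, <- psum_plus. reflexivity.
Qed.

Lemma psum_delta x c M :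
  psum (fun b => if Nat.eq_dec x b then c else 0) M = if lt_dec x M then c else 0.
Proof.
  induction M; simpl.
  - destruct (lt_dec x 0); [lia|lra].
  - rewrite IHM. destruct (Nat.eq_dec x M), (lt_dec x M), (lt_dec x (S M)); try lia; lra.
Qed.

Lemma sum_f_psum s n : sum_f_R0 s n = psum s (S n).
Proof. induction n; simpl; [lra|]. rewrite IHn; simpl; lra. Qed.

Lemma psum_ge_atom (t : nat -> R) p K : (forall a, 0 <= t a) ->
  (forall i, (i < K)%nat -> t i = 0 \/ p <= t i) ->
  0 < psum t K -> p <= psum t K.
Proof.
  intros Hn. induction K; simpl; intros H Hp; [lra|].
  pose proof (psum_nonneg t K Hn). pose proof (Hn K).
  destruct (Rlt_dec 0 (psum t K)) as [Hl|Hl].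
  - assert (p <= psum t K) by (apply IHK; auto). lra.
  - destruct (H K ltac:(lia)); lra.
Qed.

Lemma psum_bracket (g : nat -> R) t : 0 <= t -> forall K, t < psum g K ->
  exists i, (S i <= K)%nat /\ psum g i <= t < psum g (S i).
Proof.
  intros Ht. induction K; simpl; intros H; [lra|].
  destruct (Rlt_dec t (psum g K)) as [H'|H'].
  - destruct (IHK H') as [i [? ?]]. exists i; split; auto.
  - exists K. split; auto. simpl. lra.
Qed.

Lemma bound_exists (g : nat -> nat) K : exists M, forall i, (i < K)%nat -> (g i < M)%nat.
Proof.
  induction K.
  - exists 0%nat; intros; lia.
  - destruct IHK as [M HM]. exists (Nat.max M (S (g K))). intros i Hi.
    destruct (Nat.eq_dec i K) as [->|]; [lia|]. specialize (HM i ltac:(lia)). lia.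
Qed.

Fixpoint lsum (f : nat -> R) (l : list nat) : R :=
  match l with nil => 0 | a :: l' => f a + lsum f l' end.

Lemma lsum_app f l1 l2 : lsum f (l1 ++ l2) = lsum f l1 + lsum f l2.
Proof. induction l1; simpl; [lra|]. rewrite IHl1; lra. Qed.

Lemma lsum_nonneg f l : (forall a, 0 <= f a) -> 0 <= lsum f l.
Proof. intros H; induction l; simpl; [lra|]. specialize (H a); lra. Qed.

Lemma lsum_incl f l1 : (forall a, 0 <= f a) -> forall l2, NoDup l1 -> NoDup l2 ->
  incl l1 l2 -> lsum f l1 <= lsum f l2.
Proof.
  intros Hf. induction l1 as [|a l1 IH]; intros l2 H1 H2 Hi; simpl.
  - apply lsum_nonneg; auto.
  - assert (Ha : In a l2) by (apply Hi; left; auto).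
    destruct (in_split _ _ Ha) as [x [y ->]].
    inversion H1 as [|? ? Hnot Hl1]; subst.
    assert (IH' : lsum f l1 <= lsum f (x ++ y)).
    { apply IH; [exact Hl1|eapply NoDup_remove_1; eauto|].
      intros b Hb. assert (Hb2 : In b (x ++ a :: y)) by (apply Hi; right; auto).
      apply in_app_or in Hb2; apply in_or_app.
      destruct Hb2 as [Hb2|[Hb2|Hb2]]; auto. subst. contradiction. }
    rewrite lsum_app in IH' |- *; simpl. lra.
Qed.

Lemma lsum_map f g l : lsum f (map g l) = lsum (fun i => f (g i)) l.
Proof. induction l; simpl; auto. rewrite IHl; auto. Qed.

Lemma psum_lsum f k : psum f k = lsum f (seq 0 k).
Proof.
  induction k; [reflexivity|]. cbn [psum]. rewrite seq_S, lsum_app; simpl. rewrite IHk. lra.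
Qed.

Lemma lsum_filter f (pb : nat -> bool) l :
  lsum (fun b => if pb b then f b else 0) l = lsum f (filter pb l).
Proof. induction l; simpl; auto. destruct (pb a); simpl; rewrite IHl; lra. Qed.

Definition injective_below (g : nat -> nat) (K : nat) : Prop :=
  forall i j, (i < K)%nat -> (j < K)%nat -> g i = g j -> i = j.

Lemma injective_below_NoDup g K : injective_below g K -> NoDup (map g (seq 0 K)).
Proof.
  intros Hg. apply NoDup_map_NoDup_ForallPairs; [|apply seq_NoDup].
  intros a b Ha Hb. apply in_seq in Ha, Hb. apply Hg; lia.
Qed.

Lemma psum_reindex_le f g K M : (forall a, 0 <= f a) -> injective_below g K ->
  (forall i, (i < K)%nat -> (g i < M)%nat) ->
  psum (fun i => f (g i)) K <= psum f M.
Proof.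
  intros Hf Hg HM. rewrite !psum_lsum, <- (lsum_map f g).
  apply lsum_incl; auto using injective_below_NoDup, seq_NoDup.
  intros a Ha. apply in_map_iff in Ha. destruct Ha as [i [<- Hi]].
  apply in_seq in Hi. apply in_seq. specialize (HM i ltac:(lia)). lia.
Qed.

Lemma psum_support_le f (pb : nat -> bool) g K M : (forall a, 0 <= f a) ->
  injective_below g K ->
  (forall b, (b < M)%nat -> pb b = true -> exists i, (i < K)%nat /\ g i = b) ->
  psum (fun b => if pb b then f b else 0) M <= psum (fun i => f (g i)) K.
Proof.
  intros Hf Hg Hcov. rewrite !psum_lsum, lsum_filter, <- (lsum_map f g).
  apply lsum_incl; auto using injective_below_NoDup, NoDup_filter, seq_NoDup.
  intros b Hb. apply filter_In in Hb. destruct Hb as [Hb Hpb]. apply in_seq in Hb.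
  destruct (Hcov b ltac:(lia) Hpb) as [i [Hi Hgi]].
  apply in_map_iff. exists i. split; auto. apply in_seq. lia.
Qed.

Lemma psum_le_lim s l : (forall a, 0 <= s a) -> infinite_sum s l -> forall M, psum s M <= l.
Proof.
  intros Hs Hl M. destruct (Rle_dec (psum s M) l) as [|H]; auto. exfalso.
  destruct (Hl (psum s M - l)) as [N HN]; [lra|].
  specialize (HN (N + M)%nat ltac:(lia)). rewrite sum_f_psum in HN. unfold R_dist in HN.
  assert (psum s M <= psum s (S (N + M))) by (apply psum_mono; auto; lia).
  apply Rabs_def2 in HN. lra.
Qed.

Lemma series_sum_spec s B : (forall a, 0 <= s a) -> (forall M, psum s M <= B) ->
  infinite_sum s (series_sum s).
Proof.
  intros Hs HB. unfold series_sum. apply epsilon_spec.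
  destruct (growing_cv (sum_f_R0 s)) as [l Hl].
  - intro n. simpl. specialize (Hs (S n)). lra.
  - exists B. intros x [i ->]. rewrite sum_f_psum. apply HB.
  - exists l. exact Hl.
Qed.

Lemma cv_psum (u : nat -> nat -> R) (l : nat -> R) M :
  (forall b, Un_cv (u b) (l b)) -> Un_cv (fun N => psum (fun b => u b N) M) (psum l M).
Proof.
  intros H. induction M; simpl.
  - intros e He; exists 0%nat; intros n Hn; simpl.
    unfold Rdist; rewrite Rminus_0_r, Rabs_R0; lra.
  - apply (CV_plus (fun N => psum (fun b => u b N) M) (u M)); auto.
Qed.

Lemma pmf_psum P : is_pmf P -> forall M, psum P M <= 1.
Proof. intros [H1 H2]. apply psum_le_lim; auto. Qed.

Definition push_term (P : nat -> R) (phi : nat -> nat) (b a : nat) : R :=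
  if Nat.eq_dec (phi a) b then P a else 0.

Lemma push_term_nonneg P phi b : is_pmf P -> forall a, 0 <= push_term P phi b a.
Proof. intros [H _] a. unfold push_term. destruct Nat.eq_dec; auto; lra. Qed.

Lemma push_conv P phi b : is_pmf P -> infinite_sum (push_term P phi b) (push P phi b).
Proof.
  intros HP. unfold push. apply (series_sum_spec _ 1).
  - apply push_term_nonneg; auto.
  - intros M. eapply Rle_trans; [|apply (pmf_psum P HP M)].
    apply psum_le. intros a _. unfold push_term. destruct HP as [H _].
    destruct Nat.eq_dec; [lra|apply H].
Qed.

Lemma push_nonneg P phi b : is_pmf P -> 0 <= push P phi b.
Proof.
  intros HP.
  apply (psum_le_lim _ _ (push_term_nonneg P phi b HP) (push_conv P phi b HP) 0).
Qed.

Lemma push_psum P phi : is_pmf P -> forall M, psum (push P phi) M <= 1.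
Proof.
  intros HP M.
  assert (Hc : Un_cv (fun N => psum (fun b => sum_f_R0 (push_term P phi b) N) M)
                     (psum (push P phi) M))
    by (apply cv_psum; intros b; apply push_conv; auto).
  assert (H1 : Un_cv (fun _ => 1) 1)
    by (intros e He; exists 0%nat; intros; unfold Rdist; rewrite Rminus_diag, Rabs_R0; lra).
  eapply Rle_cv_lim; [|exact Hc|exact H1].
  intro N; cbv beta.
  rewrite (psum_ext _ (fun b => psum (fun a => push_term P phi b a) (S N)))
    by (intros; apply sum_f_psum).
  rewrite psum_swap.
  eapply Rle_trans; [|apply (pmf_psum P HP (S N))].
  apply psum_le. intros a _. unfold push_term. rewrite psum_delta.
  destruct HP as [H _]. destruct lt_dec; [lra|apply H].
Qed.

Lemma var_dist_conv Q P phi : is_pmf Q -> is_pmf P ->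
  infinite_sum (fun b => Rabs (Q b - push P phi b)) (var_dist Q (push P phi)).
Proof.
  intros HQ HP. unfold var_dist. apply (series_sum_spec _ 2).
  - intros; apply Rabs_pos.
  - intros M. eapply Rle_trans.
    + apply (psum_le _ (fun b => Q b + push P phi b)).
      intros a _. assert (0 <= Q a) by (apply HQ).
      assert (0 <= push P phi a) by (apply push_nonneg; auto).
      unfold Rabs; destruct Rcase_abs; lra.
    + rewrite psum_plus. pose proof (pmf_psum Q HQ M). pose proof (push_psum P phi HP M). lra.
Qed.

Lemma valid_down L i j : valid_idx L j -> (i <= j)%nat -> valid_idx L i.
Proof. destruct L; simpl; auto; lia. Qed.

Section Enumeration.
Variables (P : nat -> R) (L : option nat) (z : nat -> nat).
Hypothesis HE : is_decr_enum P L z.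

Lemma enum_antitone k : valid_idx L k -> forall i, (i <= k)%nat -> P (z k) <= P (z i).
Proof.
  destruct HE as [_ [_ [_ Hd]]]. induction k; intros Hk i Hi.
  - replace i with 0%nat by lia; lra.
  - destruct (Nat.eq_dec i (S k)) as [->|Hne]; [lra|].
    assert (valid_idx L k) by (apply (valid_down L k (S k)); auto).
    specialize (Hd k Hk). specialize (IHk H i ltac:(lia)). lra.
Qed.

Lemma enum_injective K : (forall i, (i < K)%nat -> valid_idx L i) -> injective_below z K.
Proof. destruct HE as [Hi _]. intros HK i j Hi' Hj'. apply Hi; auto. Qed.

Lemma enum_cover M : exists K,
  (forall i, (i < K)%nat -> valid_idx L i) /\
  forall a, (a < M)%nat -> 0 < P a -> exists i, (i < K)%nat /\ z i = a.
Proof.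
  destruct HE as [_ [_ [Hc _]]]. induction M.
  - exists 0%nat; split; intros; lia.
  - destruct IHM as [K [HK1 HK2]].
    destruct (Rlt_dec 0 (P M)) as [Hp|Hp].
    + destruct (Hc M Hp) as [i [Hv Hz]].
      exists (Nat.max K (S i)). split.
      * intros i' Hi'. destruct (lt_dec i' K); [apply HK1; auto|].
        apply (valid_down L i' i); auto; lia.
      * intros a Ha Hpa. destruct (Nat.eq_dec a M) as [->|].
        -- exists i; split; auto; lia.
        -- destruct (HK2 a ltac:(lia) Hpa) as [i' [? ?]]. exists i'; split; auto; lia.
    + exists K. split; auto. intros a Ha Hpa. destruct (Nat.eq_dec a M) as [->|].
      * contradiction.
      * apply HK2; auto; lia.
Qed.

Lemma enum_mass_exceeds : is_pmf P -> forall t, t < 1 ->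
  exists K, (forall i, (i < K)%nat -> valid_idx L i) /\ t < psum (fun j => P (z j)) K.
Proof.
  intros [Hnn Hs] t Ht.
  destruct (Hs (1 - t)) as [N HN]; [lra|].
  specialize (HN N (le_n _)). rewrite sum_f_psum in HN. unfold R_dist in HN.
  apply Rabs_def2 in HN.
  destruct (enum_cover (S N)) as [K [HK1 HK2]].
  exists K. split; auto.
  set (pos := fun a => if Rlt_dec 0 (P a) then true else false).
  assert (psum (fun a => if pos a then P a else 0) (S N) <= psum (fun j => P (z j)) K).
  { apply psum_support_le; auto using enum_injective.
    intros a Ha Hpa. unfold pos in Hpa. destruct Rlt_dec; [auto|discriminate]. }
  rewrite (psum_ext _ P) in H; [lra|].
  intros a _. unfold pos. destruct Rlt_dec; auto. specialize (Hnn a); lra.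
Qed.

(* The letters strictly more likely than z j lie among z 0, ..., z (j-1). *)
Lemma heavy_mass_le_prefix j M : (forall a, 0 <= P a) -> valid_idx L j ->
  psum (fun b => if Rlt_dec (P (z j)) (P b) then P b else 0) M
  <= psum (fun i => P (z i)) j.
Proof.
  intros Hnn Hj. pose proof HE as [_ [Hpos [Hc _]]].
  pose proof (Hpos j Hj) as Hzj.
  set (heavy := fun b => if Rlt_dec (P (z j)) (P b) then true else false).
  rewrite (psum_ext _ (fun b => if heavy b then P b else 0))
    by (intros; unfold heavy; destruct Rlt_dec; auto).
  apply psum_support_le; auto.
  - apply enum_injective. intros i Hi. apply (valid_down L i j); auto; lia.
  - intros a _ Ha. unfold heavy in Ha. destruct Rlt_dec as [Hqa|]; [|discriminate].
    destruct (Hc a) as [i [Hvi Hzi]]; [lra|].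
    exists i. split; auto. destruct (lt_dec i j); auto.
    exfalso. assert (P (z i) <= P (z j)) by (apply enum_antitone; auto; lia).
    subst a. lra.
Qed.

Lemma cfun_spec t : is_pmf P -> 0 <= t < 1 ->
  exists k, valid_idx L k
    /\ psum (fun j => P (z j)) k <= t < psum (fun j => P (z j)) (S k)
    /\ cfun P L z t = ln (/ P (z k)).
Proof.
  intros HP Ht.
  destruct (enum_mass_exceeds HP t ltac:(lra)) as [K [HK1 HK2]].
  destruct (psum_bracket _ t ltac:(lra) K HK2) as [i [Hi1 Hi2]].
  assert (Hex : exists i, valid_idx L i /\
     psum (fun j => P (z j)) i <= t < psum (fun j => P (z j)) (S i))
    by (exists i; split; [apply HK1; lia|exact Hi2]).
  destruct (epsilon_spec (inhabits 0%nat) _ Hex) as [Hs1 Hs2].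
  eexists. split; [exact Hs1|]. split; [exact Hs2|]. reflexivity.
Qed.

End Enumeration.

Definition prefix_push (P : nat -> R) (phi : nat -> nat) (z : nat -> nat) (K b : nat) : R :=
  psum (fun i => push_term P phi b (z i)) K.

Section PrefixPush.
Variables (P : nat -> R) (phi : nat -> nat) (z : nat -> nat) (K : nat).
Hypothesis HP : is_pmf P.

Lemma prefix_push_nonneg b : 0 <= prefix_push P phi z K b.
Proof. apply psum_nonneg; intros; apply push_term_nonneg; auto. Qed.

Lemma prefix_push_le_push b : injective_below z K -> prefix_push P phi z K b <= push P phi b.
Proof.
  intros Hz. destruct (bound_exists z K) as [M HM].
  eapply Rle_trans.
  - apply (psum_reindex_le (push_term P phi b) z K M); auto using push_term_nonneg.
  - apply psum_le_lim; auto using push_term_nonneg, push_conv.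
Qed.

Lemma prefix_push_atom p b : (forall i, (i < K)%nat -> p <= P (z i)) ->
  0 < prefix_push P phi z K b -> p <= prefix_push P phi z K b.
Proof.
  intros Hp. apply psum_ge_atom.
  - intros; apply push_term_nonneg; auto.
  - intros i Hi. unfold push_term. destruct Nat.eq_dec; [right; auto|left; auto].
Qed.

Lemma prefix_push_total M : (forall i, (i < K)%nat -> (phi (z i) < M)%nat) ->
  psum (prefix_push P phi z K) M = psum (fun i => P (z i)) K.
Proof.
  intros HM. unfold prefix_push, push_term. rewrite psum_swap. apply psum_ext.
  intros i Hi. rewrite psum_delta. destruct lt_dec as [|Hn]; [reflexivity|].
  exfalso; apply Hn, HM, Hi.
Qed.

End PrefixPush.

(* Letterwise form of the transport inequality: y = Q b, s = push b, w = prefix_push b. *)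
Lemma transport_pointwise p q w s y : 0 <= q < p -> 0 <= w -> w <= s ->
  (0 < w -> p <= w) -> (p - q) * w <= (p - q) * (if Rlt_dec q y then y else 0) + p * Rabs (y - s).
Proof.
  intros Hqp Hw Hws Hatom.
  assert (Habs : s - y <= Rabs (y - s)) by (rewrite Rabs_minus_sym; apply Rle_abs).
  destruct (Rlt_dec q y) as [Hheavy|Hlight].
  - assert ((p - q) * w <= (p - q) * s) by (apply Rmult_le_compat_l; lra).
    assert ((p - q) * (s - y) <= (p - q) * Rabs (y - s)) by (apply Rmult_le_compat_l; lra).
    assert ((p - q) * Rabs (y - s) <= p * Rabs (y - s))
      by (apply Rmult_le_compat_r; [apply Rabs_pos|lra]).
    lra.
  - destruct (Rlt_dec 0 w) as [Hpos|Hzero].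
    + pose proof (Hatom Hpos).
      assert (p * (s - y) <= p * Rabs (y - s)) by (apply Rmult_le_compat_l; lra).
      assert (q * p <= q * w) by (apply Rmult_le_compat_l; lra).
      assert (p * w <= p * s) by (apply Rmult_le_compat_l; lra).
      assert (p * y <= p * q) by (apply Rmult_le_compat_l; lra).
      lra.
    + replace w with 0 by lra. pose proof (Rabs_pos (y - s)). nra.
Qed.

Lemma prefix_transport_bound P Q LX LY zx zy phi eps delta k j :
  is_pmf P -> is_pmf Q -> is_decr_enum P LX zx -> is_decr_enum Q LY zy ->
  valid_idx LX k -> delta + eps < psum (fun i => P (zx i)) (S k) ->
  valid_idx LY j -> psum (fun i => Q (zy i)) j <= delta ->
  Q (zy j) < P (zx k) ->
  (P (zx k) - Q (zy j)) * eps <= P (zx k) * var_dist Q (push P phi).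
Proof.
  intros HP HQ HEX HEY Hk HkS Hj Hjd Hqp.
  assert (Hq : 0 < Q (zy j)) by (apply HEY; auto).
  set (p := P (zx k)) in *. set (q := Q (zy j)) in *.
  set (w := prefix_push P phi zx (S k)).
  set (heavy := fun b => if Rlt_dec q (Q b) then Q b else 0).
  set (d := var_dist Q (push P phi)).
  destruct (bound_exists (fun i => phi (zx i)) (S k)) as [M HM].
  assert (Hw_total : psum w M = psum (fun i => P (zx i)) (S k))
    by (apply prefix_push_total; auto).
  assert (Hheavy : psum heavy M <= delta).
  { eapply Rle_trans; [apply (heavy_mass_le_prefix Q LY zy HEY)|]; auto. apply HQ. }
  assert (Hd : psum (fun b => Rabs (Q b - push P phi b)) M <= d)
    by (apply psum_le_lim; [intros; apply Rabs_pos|apply var_dist_conv; auto]).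
  assert (Hsum : psum (fun b => (p - q) * w b) M
                 <= psum (fun b => (p - q) * heavy b + p * Rabs (Q b - push P phi b)) M).
  { apply psum_le; intros b _. apply transport_pointwise; try lra.
    - apply prefix_push_nonneg; auto.
    - apply prefix_push_le_push; auto.
      apply (enum_injective P LX zx HEX). intros i Hi. apply (valid_down LX i k); auto; lia.
    - apply prefix_push_atom; auto. intros i Hi.
      apply (enum_antitone P LX zx HEX k Hk). lia. }
  rewrite psum_plus, !psum_scal, Hw_total in Hsum.
  assert ((p - q) * (delta + eps) <= (p - q) * psum (fun i => P (zx i)) (S k))
    by (apply Rmult_le_compat_l; lra).
  assert ((p - q) * psum heavy M <= (p - q) * delta) by (apply Rmult_le_compat_l; lra).
  assert (p * psum (fun b => Rabs (Q b - push P phi b)) M <= p * d)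
    by (apply Rmult_le_compat_l; lra).
  lra.
Qed.

Lemma cfun_gap P Q LX LY zx zy phi eps gamma delta :
  is_pmf P -> is_pmf Q -> is_decr_enum P LX zx -> is_decr_enum Q LY zy ->
  0 < eps -> 0 < gamma -> 0 <= delta < 1 - eps ->
  var_dist Q (push P phi) < eps * (1 - exp (- gamma)) ->
  cfun P LX zx (delta + eps) - cfun Q LY zy delta >= - gamma.
Proof.
  intros HP HQ HEX HEY Heps Hg Hd Hvd.
  destruct (cfun_spec P LX zx HEX (delta + eps) HP ltac:(lra)) as [k [Hk [Hkb ->]]].
  destruct (cfun_spec Q LY zy HEY delta HQ ltac:(lra)) as [j [Hj [Hjb ->]]].
  assert (Hp : 0 < P (zx k)) by (apply HEX; auto).
  assert (Hq : 0 < Q (zy j)) by (apply HEY; auto).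
  pose proof (exp_pos (- gamma)) as He0.
  assert (He1 : exp (- gamma) < 1) by (rewrite <- exp_0; apply exp_increasing; lra).
  set (p := P (zx k)) in *. set (q := Q (zy j)) in *.
  assert (Hratio : p * exp (- gamma) < q).
  { destruct (Rlt_dec q p) as [Hqp|Hqp]; [|nra].
    pose proof (prefix_transport_bound P Q LX LY zx zy phi eps delta k j
                  HP HQ HEX HEY Hk ltac:(lra) Hj ltac:(lra) Hqp) as Htr.
    fold p q in Htr.
    assert (p * var_dist Q (push P phi) < p * (eps * (1 - exp (- gamma))))
      by (apply Rmult_lt_compat_l; lra).
    nra. }
  assert (Hln : ln (p * exp (- gamma)) < ln q) by (apply ln_increasing; nra).
  rewrite ln_mult, ln_exp in Hln by lra.
  rewrite !ln_Rinv by lra. lra.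
Qed.

Theorem theorem2
  (PX PY : nat -> nat -> R)
  (hX : forall n, is_pmf (PX n)) (hY : forall n, is_pmf (PY n))
  (LX LY : nat -> option nat) (zX zY : nat -> nat -> nat)
  (hzX : forall n, is_decr_enum (PX n) (LX n) (zX n))
  (hzY : forall n, is_decr_enum (PY n) (LY n) (zY n))
  (happrox : approximating PX PY) :
  forall eps, 0 < eps < 1 ->
  forall gamma, 0 < gamma ->
  exists N : nat, forall n : nat, (N <= n)%nat ->
  forall delta, 0 <= delta < 1 - eps ->
    cfun (PX n) (LX n) (zX n) (delta + eps) - cfun (PY n) (LY n) (zY n) delta >= - gamma.
Proof.
  intros eps Heps gamma Hg. destruct happrox as [phi Hphi].
  assert (Htol : 0 < eps * (1 - exp (- gamma))).
  { assert (exp (- gamma) < 1) by (rewrite <- exp_0; apply exp_increasing; lra). nra. }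
  destruct (Hphi _ Htol) as [N HN].
  exists N. intros n Hn delta Hd.
  specialize (HN n Hn). unfold Rdist in HN. rewrite Rminus_0_r in HN.
  apply Rabs_def2 in HN.
  apply (cfun_gap _ _ _ _ _ _ (phi n)); auto; lra.
Qed.
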